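(* Let $M$ be a $d$-dimensional simplicial complex and $N$ a $(d-1)$-dimensional induced subcomplex of $M$, and suppose both $M$ and $N$ are normal pseudomanifolds. Then (a) for any vertex $u$ of $N$ and any vertex $v$ of the simplicial complement $C(N, M)$, there is a path $P$ in the edge graph of $M$ joining $u$ to $v$ such that $u$ is the only vertex of $P$ lying in $N$; and (b) $C(N, M)$ has at most two connected components.
   Context: A simplicial complex is a finite set of finite sets closed under taking subsets; an element of size $i+1$ is an $i$-face (the empty set is the unique $(-1)$-face); $V(X)$ is the vertex set. For $A\subseteq V(M)$ the induced subcomplex $M[A]$ consists of all faces of $M$ contained in $A$; $N$ is an induced subcomplex if $N=M[V(N)]$. The simplicial complement of an induced subcomplex $N$ is $C(N,M)=M[V(M)\setminus V(N)]$. A pure $d$-dimensional complex has all maximal faces (facets) of dimension $d$. The link of a face $\alpha$ is $\mathrm{lk}_X(\alpha)=\{\beta\in X:\beta\cap\alpha=\emptyset,\ \alpha\cup\beta\in X\}$. A complex is connected if its edge graph is connected. A $d$-dimensional normal pseudomanifold ($d\ge1$) is a pure $d$-dimensional simplicial complex in which every $(d-1)$-face lies in exactly two facets and the link of every face of dimension $\le d-2$ (including the empty face, whose link is the whole complex) is connected. *)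

From mathcomp Require Import all_boot.
Set Implicit Arguments. Unset Strict Implicit. Unset Printing Implicit Defensive.

Section Complexes.
Variable T : finType.
Implicit Types (X : {set {set T}}) (A s t a : {set T}).

Definition simplicial_complex X : Prop :=
  forall s t, s \in X -> t \subset s -> t \in X.

Definition vertices X : {set T} := \bigcup_(s in X) s.

Definition induced X A : {set {set T}} := [set s in X | s \subset A].

Definition is_induced_subcomplex (N M : {set {set T}}) : Prop :=
  N \subset M /\ N = induced M (vertices N).

Definition scomplement (N M : {set {set T}}) : {set {set T}} :=
  induced M (vertices M :\: vertices N).

(* an i-face has i+1 elements; dimension d (as a nat, d >= 0):
   there is a face with d+1 elements and every face has at most d+1 *)
Definition has_dim X (d : nat) : Prop :=
  (exists2 s, s \in X & #|s| = d.+1) /\ (forall s, s \in X -> #|s| <= d.+1).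

Definition facet X s : bool :=
  (s \in X) && [forall t in X, (s \subset t) ==> (t == s)].

Definition pure_dim X (d : nat) : Prop :=
  has_dim X d /\ (forall s, facet X s -> #|s| = d.+1).

Definition link X a : {set {set T}} :=
  [set b in X | [disjoint b & a] && (a :|: b \in X)].

Definition edge_rel X : rel T := fun x y => (x != y) && ([set x; y] \in X).

Definition sconnected X : Prop :=
  forall u v, u \in vertices X -> v \in vertices X -> connect (edge_rel X) u v.

Definition component X x : {set T} :=
  [set y in vertices X | connect (edge_rel X) x y].

Definition num_components X : nat :=
  #|[set component X x | x in vertices X]|.

Definition normal_pseudomanifold X (d : nat) : Prop :=
  [/\ 1 <= d, pure_dim X d,
      (forall f, f \in X -> #|f| = d ->
          #|[set s | facet X s & f \subset s]| = 2)
    & (forall a, a \in X -> #|a| <= d.-1 -> sconnected (link X a))].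

End Complexes.

(* The two facets of M through a (d-1)-face s of N are s + x for two apex
   vertices x, which lie outside N; let R(s) be the set of vertices reachable
   in C(N,M) from an apex of s.  If r + a and r + b are facets of N meeting in
   the ridge r, the link of r in M is a cycle (connected and 2-regular) on which
   a and b are not adjacent and whose other vertices lie in C(N,M); a parity
   count shows that every neighbour of b is joined to a neighbour of a along
   this cycle avoiding a and b, so R(r + b) = R(r + a).  Strong connectivity
   of N makes R(s) independent of s, and strong connectivity of M then puts
   every vertex of C(N,M) into it.  So a vertex u of N reaches every vertex of
   C(N,M) through an apex of a facet of N at u, and every component of C(N,M)
   contains one of the two apexes of a fixed s. *)

From mathcomp Require Import all_boot zify.
Set Implicit Arguments. Unset Strict Implicit. Unset Printing Implicit Defensive.

Section Graphs.
Variable T : finType.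
Implicit Types (e : rel T) (A D V : {set T}).

Lemma connect_preserved e (P : T -> Prop) u v :
  (forall z w, P z -> e z w -> P w) -> connect e u v -> P u -> P v.
Proof.
move=> eP /connectP [p pth ->]; elim: p u pth => [|w p IH] u //= /andP [euw pth] Pu.
exact: IH pth (eP _ _ Pu euw).
Qed.

Lemma handshake e D : symmetric e -> irreflexive e ->
  ~~ odd (\sum_(v in D) \sum_(w in D) (e v w : nat)).
Proof.
move=> esym eirr.
(* [up v w] counts the edge {v, w} from its endpoint of smaller rank. *)
pose up v w : nat := e v w && (enum_rank v < enum_rank w).
have split_edge v w : (e v w : nat) = up v w + up w v.
  rewrite /up (esym w v); case evw: (e v w) => //=.
  case: ltngtP => // /val_inj/enum_rank_inj vw.
  by rewrite vw eirr in evw.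
under eq_bigr => v _ do under eq_bigr => w _ do rewrite split_edge.
under eq_bigr => v _ do rewrite big_split /=.
by rewrite big_split /= [X in _ + X]exchange_big addnn odd_double.
Qed.

Lemma path_all e (P : pred T) x p :
  (forall y z, e y z -> P z) -> path e x p -> all P p.
Proof. by move=> eP; elim: p x => //= y p IH x /andP [/eP -> /IH]. Qed.

Lemma cut_even e D : symmetric e -> irreflexive e ->
  {in D, forall v, #|[set w | e v w]| = 2} ->
  ~~ odd (\sum_(v in D) \sum_(w in ~: D) (e v w : nat)).
Proof.
move=> esym eirr deg.
have degD v : v \in D -> \sum_(w in D) (e v w : nat) + \sum_(w in ~: D) (e v w : nat) = 2.
  move=> vD; rewrite -(deg v vD) -sum1_card [RHS]big_mkcond [RHS](bigID (mem D)) /=.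
  by congr (_ + _); apply: eq_big => w; rewrite ?inE //; case: (e v w).
have sumD : \sum_(v in D) (\sum_(w in D) (e v w : nat) + \sum_(w in ~: D) (e v w : nat))
    = #|D|.*2.
  by rewrite -sum1_card -muln2 big_distrl /=; apply: eq_bigr => v /degD.
move: (congr1 odd sumD); rewrite big_split oddD odd_double /=.
by move/negbTE: (handshake D esym eirr) => -> /= ->.
Qed.

Definition avoiding e A : rel T := [rel u w | [&& e u w, u \notin A & w \notin A]].

Lemma avoiding_notin e A p z : p \notin A -> connect (avoiding e A) p z -> z \notin A.
Proof.
move=> pA pz; apply: (connect_preserved (P := fun w => w \notin A) _ pz pA).
by move=> y w _ /and3P [].
Qed.

Lemma connect_avoiding_step e A p z w : p \notin A ->
  connect (avoiding e A) p z -> e z w -> w \notin A -> connect (avoiding e A) p w.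
Proof.
move=> pA pz ezw wA; have zA := avoiding_notin pA pz.
by apply: connect_trans pz (connect1 _); rewrite /avoiding /= ezw wA zA.
Qed.

Lemma cycle_detour e V a b p :
  symmetric e -> irreflexive e ->
  {in V, forall c c', e c c' -> c' \in V} ->
  {in V, forall c, #|[set c' | e c c']| = 2} ->
  {in V &, forall u v, connect e u v} ->
  a \in V -> b \in V -> a != b -> ~~ e a b -> e b p ->
  exists2 x, e a x & connect (avoiding e [set a; b]) p x.
Proof.
move=> esym eirr eV deg conn aV bV anb nab ebp.
set D := [set w | connect (avoiding e [set a; b]) p w].
have pD : p \in D by rewrite inE connect0.
have [/exists_inP [x] | /exists_inPn nD] := boolP [exists x in D, e a x].
  by rewrite inE => px ax; exists x.
have pab : p \notin [set a; b].
  rewrite !inE negb_or; apply/andP; split.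
    by apply: contraNneq nab => pa; rewrite -pa esym.
  by apply: contraTneq ebp => ->; rewrite eirr.
have Dab w : w \in D -> w \notin [set a; b] by rewrite inE; apply: avoiding_notin.
have DV w : w \in D -> w \in V.
  rewrite inE => pw; have {}pw : connect e p w.
    by apply: connect_sub pw => y z /andP [yz _]; apply: connect1.
  apply: (connect_preserved (P := fun w => w \in V) _ pw (eV b bV p ebp)) => y z /eV; apply.
have Dout z w : z \in D -> e z w -> w \notin D -> w = b.
  move=> zD ezw; apply: contraNeq => wb; move: zD (nD z zD); rewrite !inE => pz naz.
  apply: (connect_avoiding_step pab pz ezw); rewrite !inE negb_or wb andbT.
  by apply: contraNneq naz => <-; rewrite esym.
have [q Nb] : exists q, [set c' | e b c'] = [set p; q].
  have : #|[set c' | e b c']| == 2 by rewrite deg.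
  case/cards2P => x [y [_ Nb]].
  have : p \in [set x; y] by rewrite -Nb inE.
  by case/set2P => ->; [exists y | exists x; rewrite setUC].
have Nbw w : e b w = (w \in [set p; q]) by rewrite -Nb inE.
have qD : q \notin D.
  apply/negP => qD; have : a \in b |: D.
    apply: (connect_preserved (P := fun w => w \in b |: D) _ (conn b a bV aV)).
      move=> z w; rewrite !in_setU1 => /predU1P [-> | zD] ezw.
        by move: ezw; rewrite Nbw => /set2P [] ->; rewrite ?pD ?qD orbT.
      by case: (boolP (w \in D)) => wD; rewrite ?orbT // (Dout z w zD ezw wD) eqxx.
    exact: setU11.
  by rewrite in_setU1 (negbTE anb) /= => /Dab; rewrite !inE eqxx.
have bD : b \notin D by apply: contraTN isT => /Dab; rewrite !inE eqxx orbT.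
(* The only edge leaving D is {p, b}, against [cut_even]. *)
have cut : \sum_(v in D) \sum_(w in ~: D) (e v w : nat) = 1.
  rewrite -[RHS](_ : \sum_(v in D) (v == p : nat) = 1); last first.
    by rewrite (bigD1 p) //= eqxx big1 // => v /andP [_ /negbTE ->].
  apply: eq_bigr => v vD; rewrite (bigD1 b) ?in_setC //= big1 ?addn0 => [|w].
    rewrite esym Nbw !inE; case: (v =P q) => [vq | _]; last by rewrite orbF.
    by rewrite vq (negbTE qD) in vD.
  rewrite in_setC => /andP [wD wb]; case ewv: (e v w) => //.
  by rewrite (Dout v w vD ewv wD) eqxx in wb.
by move: (cut_even esym eirr (fun v vD => deg v (DV v vD))); rewrite cut.
Qed.

End Graphs.

Section Complexes.
Variable T : finType.
Implicit Types (X M N : {set {set T}}) (a r s t F G : {set T}).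

Lemma verticesP X x : reflect (exists2 s, s \in X & x \in s) (x \in vertices X).
Proof. exact: bigcupP. Qed.

Lemma sub_vertices X s : s \in X -> s \subset vertices X.
Proof. exact: bigcup_sup. Qed.

Lemma edge_rel_sym X : symmetric (edge_rel X).
Proof. by move=> x y; rewrite /edge_rel eq_sym setUC. Qed.

Lemma facet_mem X F : facet X F -> F \in X.
Proof. by case/andP. Qed.

Lemma exists_facet X s : s \in X -> exists2 F, facet X F & s \subset F.
Proof.
move=> sX; have [|F /andP [FX sF] Fmax] := @arg_maxnP _ s
  (fun t => (t \in X) && (s \subset t)) (fun t => #|t|); first by rewrite sX subxx.
exists F => //; apply/andP; split => //; apply/forall_inP => t tX; apply/implyP => Ft.
by rewrite eq_sym eqEcard Ft /=; apply: Fmax; rewrite tX (subset_trans sF Ft).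
Qed.

Lemma facet_of_card X d s : has_dim X d -> s \in X -> #|s| = d.+1 -> facet X s.
Proof.
move=> [_ dimX] sX cs; apply/andP; split => //; apply/forall_inP => t tX.
by apply/implyP => st; rewrite eq_sym eqEcard st cs dimX.
Qed.

Lemma subset_cardS s t : s \subset t -> #|t| = #|s|.+1 ->
  exists2 x, x \notin s & t = x |: s.
Proof.
move=> st ct; have : #|t :\: s| == 1 by rewrite cardsD (setIidPr st) ct subSnn.
case/cards1P => x tsx; have : x \in t :\: s by rewrite tsx set11.
rewrite inE => /andP [xs xt]; exists x => //.
by rewrite -{1}(setID t s) (setIidPr st) tsx setUC.
Qed.

Lemma induced_mem M N s :
  is_induced_subcomplex N M -> s \in M -> s \subset vertices N -> s \in N.
Proof. by case=> _ E sM sN; rewrite E inE sM. Qed.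

Definition apex X s : {set T} := [set x | (x \notin s) && (x |: s \in X)].

Lemma card_apex X d s :
  normal_pseudomanifold X d -> s \in X -> #|s| = d -> #|apex X s| = 2.
Proof.
case=> _ [dimX pureX] ridge _ sX cs; rewrite -(ridge s sX cs).
have inj : {in apex X s &, injective (fun x => x |: s)}.
  move=> x y; rewrite !inE => /andP [xs _] /andP [ys _] xy.
  by move: (setU11 x s); rewrite xy !inE (negbTE xs) orbF => /eqP.
rewrite -(card_in_imset inj); apply: eq_card => F; rewrite inE.
apply/imsetP/andP => [[x] | [fF sF]].
  rewrite inE => /andP [xs xsX] ->; split; last exact: subsetUr.
  by apply: (facet_of_card dimX xsX); rewrite cardsU1 xs cs.
have [x xs Fx] := subset_cardS sF (etrans (pureX F fF) (congr1 S (esym cs))).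
by exists x; rewrite // inE xs -Fx (facet_mem fF).
Qed.

Lemma apex_eq0 X k s : has_dim X k -> #|s| = k.+1 -> apex X s = set0.
Proof.
move=> [_ dimX] cs; apply/setP => x; rewrite !inE; apply/negP => /andP [xs /dimX].
by rewrite cardsU1 xs cs ltnn.
Qed.

Lemma apex_induced M N s x : is_induced_subcomplex N M ->
  s \in N -> x \in vertices N -> (x \in apex M s) = (x \in apex N s).
Proof.
move=> indN sN xN; rewrite !inE; case: (x \in s) => //=.
apply/idP/idP => [xsM | ]; last by apply/subsetP; case: indN.
by apply: (induced_mem indN xsM); rewrite subUset sub1set xN sub_vertices.
Qed.

(* Adjacency in the edge graph of [link X a]. *)
Definition link_rel X a : rel T := fun x y => (x \notin a) && (y \in apex X (x |: a)).

Lemma link_rel_sym X a : symmetric (link_rel X a).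
Proof.
move=> x y; rewrite /link_rel !inE !negb_or setUCA eq_sym.
by case: (x \in a); case: (y \in a); rewrite ?andbF.
Qed.

Lemma link_rel_irr X a : irreflexive (link_rel X a).
Proof. by move=> x; rewrite /link_rel !inE eqxx andbF. Qed.

Lemma link_rel_apex X a x y :
  simplicial_complex X -> link_rel X a x y -> y \in apex X a.
Proof.
move=> scX /andP [_]; rewrite !inE negb_or => /andP [/andP [_ ya] yxaX].
by rewrite ya (scX _ _ yxaX) // setUCA subsetUr.
Qed.

Lemma link_rel_neighbours X a x :
  x \notin a -> [set y | link_rel X a x y] = apex X (x |: a).
Proof. by move=> xa; apply/setP => y; rewrite [in LHS]inE /link_rel xa. Qed.

Lemma connect_link_rel X a : simplicial_complex X -> sconnected (link X a) ->
  {in apex X a &, forall u v, connect (link_rel X a) u v}.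
Proof.
move=> scX connX u v uA vA.
have link_vertex w : w \in apex X a -> w \in vertices (link X a).
  rewrite inE => /andP [wa waX]; apply/verticesP; exists [set w]; last exact: set11.
  by rewrite inE disjoints1 wa setUC waX (scX _ _ waX) // sub1set setU11.
apply: connect_sub (connX u v (link_vertex u uA) (link_vertex v vA)) => x y.
case/andP => xy; rewrite inE => /and3P [_ xya xyaX]; apply: connect1.
have [xa ya] : x \notin a /\ y \notin a.
  by split; apply/negbT; apply: (disjointFr xya); rewrite !inE eqxx ?orbT.
by rewrite /link_rel xa /= !inE negb_or eq_sym xy ya setUA [[set y] :|: _]setUC setUC.
Qed.

Lemma adjacent_facets X k F G : pure_dim X k -> facet X F -> facet X G ->
  F != G -> k <= #|F :&: G| -> #|F :&: G| = k.
Proof.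
move=> [_ pureX] fF fG FG kFG; apply/eqP; rewrite eqn_leq kFG andbT.
have : #|F :&: G| <= #|F| by rewrite subset_leq_card ?subsetIl.
rewrite (pureX F fF) leq_eqVlt ltnS => /orP [/eqP cFG | //].
have /andP [/eqP FGF /eqP FGG] : (F :&: G == F) && (F :&: G == G).
  by rewrite !eqEcard subsetIl subsetIr cFG (pureX F fF) (pureX G fG) leqnn.
by rewrite -FGF FGG eqxx in FG.
Qed.

Lemma component_connect X x y :
  connect (edge_rel X) x y -> component X x = component X y.
Proof.
move=> xy; apply/setP => z; rewrite !inE; congr (_ && _); apply/idP/idP.
  by apply: connect_trans; rewrite (sym_connect_sym (edge_rel_sym X)).
exact: connect_trans.
Qed.

Section FacetTransport.
Variables (X : {set {set T}}) (d : nat) (Q : {set T} -> Prop).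
Hypotheses (scX : simplicial_complex X) (pureX : pure_dim X d)
  (linkX : forall a, a \in X -> #|a| <= d.-1 -> sconnected (link X a))
  (Qadj : forall F G, facet X F -> facet X G -> d <= #|F :&: G| -> Q F -> Q G).

Lemma transport_through_link a F G :
  a \in X -> #|a| < d -> facet X F -> facet X G -> a \subset F -> a \subset G ->
  (forall x H H', x \notin a -> facet X H -> facet X H' ->
     x |: a \subset H -> x |: a \subset H' -> Q H -> Q H') ->
  Q F -> Q G.
Proof.
move=> aX ad fF fG aF aG transport QF.
have apex_in H : facet X H -> a \subset H ->
    exists2 x, x \in apex X a & x |: a \subset H.
  move=> fH aH; have : a \proper H by rewrite properEcard aH (pureX.2 H fH) ltnS ltnW.
  case/properP => _ [x xH xa]; have xaH : x |: a \subset H by rewrite subUset sub1set xH.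
  by exists x; rewrite // inE xa (scX (facet_mem fH) xaH).
have [f fA faF] := apex_in F fF aF; have [g gA gaG] := apex_in G fG aG.
have ad' : #|a| <= d.-1 by lia.
pose P x := exists2 H, facet X H & x |: a \subset H /\ Q H.
have [H fH [gaH QH]] : P g; last first.
  by apply: (transport g H G) => //; move: gA; rewrite inE => /andP [].
apply: (connect_preserved (P := P) _ (connect_link_rel scX (linkX aX ad') fA gA)).
  move=> x y [H fH [xaH QH]] /andP [xa]; rewrite inE => /andP [_ yxaX].
  have [H' fH' yxaH'] := exists_facet yxaX.
  exists H' => //; split; first by apply: subset_trans yxaH'; rewrite setUS ?subsetUr.
  by apply: (transport x H H') => //; apply: subset_trans yxaH'; rewrite subsetUr.
by exists F.
Qed.

Lemma facet_transport_containing a F G : a \in X -> facet X F -> facet X G ->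
  a \subset F -> a \subset G -> Q F -> Q G.
Proof.
move: {2}(d - #|a|) (leqnn (d - #|a|)) => n.
elim: n a F G => [|n IH] a F G dan aX fF fG aF aG.
all: have [da | ad] := leqP d #|a|; first apply: Qadj => //.
all: try by apply: leq_trans da (subset_leq_card _); rewrite subsetI aF aG.
  by lia.
apply: (transport_through_link aX ad fF fG aF aG) => x H H' xa fH fH' xaH xaH'.
apply: (IH (x |: a)) => //; last exact: scX (facet_mem fH) _.
by rewrite cardsU1 xa; lia.
Qed.

Lemma facet_transport F G : facet X F -> facet X G -> Q F -> Q G.
Proof.
move=> fF fG; apply: (facet_transport_containing _ fF fG); try exact: sub0set.
exact: scX (facet_mem fF) (sub0set _).
Qed.

End FacetTransport.

Lemma complement_edge M N u w : u != w -> [set u; w] \in M ->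
  u \notin vertices N -> w \notin vertices N -> edge_rel (scomplement N M) u w.
Proof.
move=> uw uwM uN wN; rewrite /edge_rel uw inE uwM; apply/subsetP => x xuw.
by rewrite inE (subsetP (sub_vertices uwM)) // andbT; case/set2P: xuw => ->.
Qed.

Lemma complement_edgeP M N x y : edge_rel (scomplement N M) x y ->
  edge_rel M x y /\ y \notin vertices N.
Proof.
case/andP => xy; rewrite inE => /andP [xyM /subsetP /(_ y)].
by rewrite /edge_rel xy xyM !inE eqxx orbT => /(_ isT) /andP [].
Qed.

Section InducedPseudomanifold.
Variables (M N : {set {set T}}) (d : nat).
Hypotheses (scM : simplicial_complex M) (indN : is_induced_subcomplex N M)
  (pmM : normal_pseudomanifold M d) (pmN : normal_pseudomanifold N d.-1).

Let C := scomplement N M.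

Definition apex_reach s : {set T} :=
  [set z | [exists x in apex M s, connect (edge_rel C) x z]].

Let NM : N \subset M. Proof. by case: indN. Qed.

Let dimN : has_dim N d.-1. Proof. by case: pmN => _ []. Qed.

Let d_gt1 : 1 < d. Proof. by case: pmN; lia. Qed.

Let pureM : pure_dim M d. Proof. by case: pmM. Qed.

Let pureN : pure_dim N d.-1. Proof. by case: pmN. Qed.

Let linkM a : a \in M -> #|a| <= d.-1 -> sconnected (link M a).
Proof. by case: pmM => _ _ _; apply. Qed.

Let linkN a : a \in N -> #|a| <= d.-1.-1 -> sconnected (link N a).
Proof. by case: pmN => _ _ _; apply. Qed.

Let scN : simplicial_complex N.
Proof.
move=> s t sN ts; apply: (induced_mem indN); first exact: scM (subsetP NM s sN) ts.
exact: subset_trans ts (sub_vertices sN).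
Qed.

Lemma apex_outside s x : s \in N -> #|s| = d -> x \in apex M s -> x \notin vertices N.
Proof.
move=> sN cs; apply: contraL => xN.
by rewrite (apex_induced indN sN xN) (apex_eq0 dimN) ?inE // cs prednK // ltnW.
Qed.

Lemma apex_reach_sub r (a b : T) : r \in N -> #|r| = d.-1 ->
  a \in apex N r -> b \in apex N r -> a != b ->
  apex_reach (b |: r) \subset apex_reach (a |: r).
Proof.
move=> rN cr aA bA ab.
have rM : r \in M := subsetP NM r rN.
have apexNM : apex N r \subset apex M r.
  by apply/subsetP => x; rewrite !inE => /andP [-> /(subsetP NM)].
have apexN : apex N r = [set a; b].
  apply/esym/eqP; rewrite eqEcard subUset !sub1set aA bA (card_apex pmN rN cr).
  by rewrite cards2 ab.
have outside u : u \in apex M r -> u \notin [set a; b] -> u \notin vertices N.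
  by move=> uA; apply: contra => uN; rewrite -apexN -(apex_induced indN rN uN).
have deg : {in apex M r, forall c, #|[set c' | link_rel M r c c']| = 2}.
  move=> c; rewrite inE => /andP [cr' crM]; rewrite link_rel_neighbours //.
  by apply: (card_apex pmM crM); rewrite cardsU1 cr' cr; lia.
have conn := connect_link_rel scM (linkM rM (eq_leq cr)).
have nab : ~~ link_rel M r a b.
  move: aA bA; rewrite !inE => /andP [ar arN] /andP [br brN].
  have bN : b \in vertices N by apply: (subsetP (sub_vertices brN)); rewrite setU11.
  rewrite /link_rel (apex_induced indN arN bN) (apex_eq0 dimN) ?inE ?andbF //.
  by rewrite cardsU1 ar cr; lia.
have avoid_edge u w : avoiding (link_rel M r) [set a; b] u w -> edge_rel C u w.
  case/and3P => euw ua wa.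
  have uA : u \in apex M r by move: euw; rewrite link_rel_sym; apply: link_rel_apex.
  have wA : w \in apex M r := link_rel_apex scM euw.
  apply: complement_edge; rewrite ?outside //.
    by apply: contraTneq euw => ->; rewrite link_rel_irr.
  move: euw => /andP [_]; rewrite inE => /andP [_ wurM].
  by apply: scM wurM _; rewrite subUset !sub1set !inE !eqxx ?orbT.
apply/subsetP => z; rewrite !inE => /exists_inP [x' x'A x'z].
have bx' : link_rel M r b x'.
  by move: bA; rewrite /link_rel inE => /andP [-> _].
have [x ax x'x] := cycle_detour (link_rel_sym M r) (link_rel_irr M r)
  (fun c _ c' => link_rel_apex scM) deg conn (subsetP apexNM a aA) (subsetP apexNM b bA)
  ab nab bx'.
apply/exists_inP; exists x; first by case/andP: ax.
apply: connect_trans x'z; rewrite sym_connect_sym; last exact: edge_rel_sym.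
by apply: connect_sub x'x => u w /avoid_edge; apply: connect1.
Qed.

Lemma apex_reach_facets F G : facet N F -> facet N G -> apex_reach F = apex_reach G.
Proof.
move=> fF fG; symmetry.
apply: (facet_transport (Q := fun H => apex_reach H = apex_reach F) scN pureN linkN _ fF fG) => //.
move=> F1 G1 fF1 fG1 kFG <-; case: (eqVneq F1 G1) => [-> // | F1G1].
have := adjacent_facets pureN fF1 fG1 F1G1 kFG.
move: (subsetIl F1 G1) (subsetIr F1 G1); move: (F1 :&: G1) => r rF rG cr.
have cF1 : #|F1| = #|r|.+1 by rewrite cr pureN.2.
have cG1 : #|G1| = #|r|.+1 by rewrite cr pureN.2.
have [a ar Fa] := subset_cardS rF cF1.
have [b br Gb] := subset_cardS rG cG1.
have rN : r \in N := scN (facet_mem fF1) rF.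
have aA : a \in apex N r by rewrite inE ar -Fa facet_mem.
have bA : b \in apex N r by rewrite inE br -Gb facet_mem.
have ab : a != b by apply: contraNneq F1G1 => ab; rewrite Fa Gb ab.
by apply/eqP; rewrite eqEsubset Fa Gb !apex_reach_sub // eq_sym.
Qed.

Lemma apex_reach_connect s z w :
  z \in apex_reach s -> connect (edge_rel C) z w -> w \in apex_reach s.
Proof.
rewrite !inE => /exists_inP [x xA xz] zw.
by apply/exists_inP; exists x => //; apply: connect_trans xz zw.
Qed.

Lemma apex_reach_adjacent s F G : facet N s -> facet M F -> facet M G ->
  d <= #|F :&: G| -> F :\: vertices N \subset apex_reach s ->
  G :\: vertices N \subset apex_reach s.
Proof.
move=> fs fF fG dFG FS; apply/subsetP => w; rewrite inE => /andP [wN wG].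
have [rN | /subsetPn [t tFG tN]] := boolP (F :&: G \subset vertices N).
  have rN' : F :&: G \in N.
    by apply: (induced_mem indN _ rN); apply: scM (facet_mem fF) (subsetIl F G).
  have cr : #|F :&: G| = d by have := dimN.2 _ rN'; lia.
  have fr : facet N (F :&: G) by apply: facet_of_card dimN rN' _; rewrite cr prednK // ltnW.
  have [|x xr Gx] := subset_cardS (subsetIr F G); first by rewrite cr pureM.2.
  rewrite -(apex_reach_facets fr fs) inE; apply/exists_inP; exists x.
    by rewrite inE xr -Gx (facet_mem fG).
  move: wG; rewrite Gx in_setU1 => /predU1P [-> // | wFG].
  by rewrite (subsetP rN w wFG) in wN.
move: (tFG); rewrite inE => /andP [tF tG].
have tS : t \in apex_reach s by apply: (subsetP FS); rewrite inE tN.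
apply: (apex_reach_connect tS); have [-> // | tw] := eqVneq t w.
apply: connect1; apply: complement_edge => //.
by apply: scM (facet_mem fG) _; rewrite subUset !sub1set tG.
Qed.

Lemma facetN_card s : facet N s -> #|s| = d.
Proof. by move=> fs; rewrite pureN.2 // prednK // ltnW. Qed.

Lemma complement_vertex_reach s v : facet N s -> v \in vertices C -> v \in apex_reach s.
Proof.
move=> fs /verticesP [t]; rewrite inE => /andP [tM tC] vt.
have [F0 fF0 sF0] := exists_facet (subsetP NM s (facet_mem fs)).
have [F fF tF] := exists_facet tM.
have [|x xs F0x] := subset_cardS sF0; first by rewrite pureM.2 // facetN_card.
suff FS : F :\: vertices N \subset apex_reach s.
  apply: (subsetP FS); move/subsetP: tC => /(_ v vt).
  by rewrite !inE (subsetP tF v vt) andbT => /andP [].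
apply: (facet_transport (Q := fun F => F :\: vertices N \subset apex_reach s)
  scM pureM linkM (fun F G => @apex_reach_adjacent s F G fs) fF0 fF).
apply/subsetP => w; rewrite F0x !inE => /andP [wN /predU1P [-> | ws]].
  by apply/exists_inP; exists x; rewrite // inE xs -F0x (facet_mem fF0).
by rewrite (subsetP (sub_vertices (facet_mem fs)) w ws) in wN.
Qed.

Lemma complement_path u v : u \in vertices N -> v \in vertices C ->
  exists p : seq T, [/\ path (edge_rel M) u p, last u p = v
                     & all (fun w => w \notin vertices N) p].
Proof.
case/verticesP => t tN ut vC; have [s fs ts] := exists_facet tN.
have := complement_vertex_reach fs vC; rewrite inE.
case/exists_inP => x xA /connectP [p xp ->]; exists (x :: p); split => //=.
  rewrite (sub_path _ xp) ?andbT => [|y z /complement_edgeP []//].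
  move: xA; rewrite inE => /andP [xs xsM]; have us := subsetP ts u ut.
  rewrite /edge_rel (scM xsM) ?andbT; first by apply: contraNneq xs => <-.
  by rewrite subUset !sub1set !inE us eqxx !orbT.
rewrite (apex_outside (facet_mem fs) (facetN_card fs) xA).
by apply: path_all xp => y z /complement_edgeP [].
Qed.

Lemma num_components_complement : num_components C <= 2.
Proof.
have [s0 s0N _] := dimN.1; have [s fs _] := exists_facet s0N.
rewrite -(card_apex pmM (subsetP NM s (facet_mem fs)) (facetN_card fs)).
apply: leq_trans (leq_imset_card (component C) _).
apply: subset_leq_card; apply/subsetP => K /imsetP [v vC ->].
have := complement_vertex_reach fs vC; rewrite inE => /exists_inP [x xA xv].
by apply/imsetP; exists x; rewrite // (component_connect xv).
Qed.

End InducedPseudomanifold.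
End Complexes.

Theorem lemma3p3 (T : finType) (M N : {set {set T}}) (d : nat) :
  simplicial_complex M -> has_dim M d ->
  is_induced_subcomplex N M -> has_dim N d.-1 ->
  normal_pseudomanifold M d -> normal_pseudomanifold N d.-1 ->
  (forall u v, u \in vertices N -> v \in vertices (scomplement N M) ->
     exists p : seq T,
       [/\ path (edge_rel M) u p, last u p = v
         & all (fun w => w \notin vertices N) p])
  /\ num_components (scomplement N M) <= 2.
Proof.
move=> scM _ indN _ pmM pmN; split.
  exact: (complement_path scM indN pmM pmN).
exact: num_components_complement scM indN pmM pmN.
Qed.
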